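(* For every $m\ge0$ and $n\ge1$ there is an injective map from $Q_4(m,n)$ to $P_4(-m,n)$.
   Context: Partitions: $\lambda_1\ge\cdots\ge\lambda_\ell>0$, $\ell(\lambda)=\ell$, $\lambda_i=0$ for $i>\ell$, $s(\lambda)$ the smallest part with $s(\emptyset)=+\infty$. Rank $=\lambda_1-\ell$; rank-set $=[-\lambda_1,1-\lambda_2,\dots,\ell-1-\lambda_\ell,\ell,\ell+1,\dots]$. $Q(m,n)$: partitions of $n$ whose rank-set contains $m$; $P(-m,n)$: partitions of $n$ with rank $\ge-m$. $m$-Durfee rectangle symbol $(\alpha,\beta)_{(m+j)\times j}$ of $\lambda$: $j\ge0$ is the largest integer with $\lambda_{m+j}\ge j$; $\alpha$ is the conjugate of $(\lambda_1-j,\dots,\lambda_{m+j}-j)$ and $\beta=(\lambda_{m+j+1},\lambda_{m+j+2},\dots)$; $|\lambda|=|\alpha|+|\beta|+j(m+j)$. $Q_4(m,n)$ is the set of $\lambda\in Q(m,n)$ whose symbol has $j\ge1$, $\ell(\beta)-\ell(\alpha)\ge1$, $\alpha_1=m+j>\alpha_2$ and $s(\beta)\ge2$. $P_4(-m,n)$ is the set of $\mu\in P(-m,n)$ whose symbol $(\gamma,\delta)_{(m+j')\times j'}$ has $j'\ge1$, $\ell(\gamma)=\ell(\delta)$, $\gamma_1=m+j'-1$, $\delta_1=j'$, and $\delta$ has a part equal to $2$. *)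

(* Partitions are represented as seq nat (parts listed in
   nonincreasing order, all positive); lambda_i = nth 0 l i.-1 for i >= 1. *)
From mathcomp Require Import all_boot.
Set Implicit Arguments. Unset Strict Implicit. Unset Printing Implicit Defensive.

Definition is_part (l : seq nat) : bool :=
  sorted geq l && all (fun x => 0 < x) l.

Definition partition_of (n : nat) (l : seq nat) : bool :=
  is_part l && (sumn l == n).

(* smallest part >= 2 (s(empty) = +infinity, so vacuous for empty) *)
Definition smallest_ge2 (l : seq nat) : bool := all (fun x => 2 <= x) l.

(* m (>= 0) belongs to the rank-set
   [-l_1, 1-l_2, ..., ell-1-l_ell, ell, ell+1, ...]:
   either m >= ell, or m = (k-1) - l_k for some 1 <= k <= ell
   (0-indexed: i = m + l_{i+1} for some i < ell). *)
Definition in_rankset (m : nat) (l : seq nat) : bool :=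
  (size l <= m) || [exists i : 'I_(size l), val i == m + nth 0 l i].

(* rank = l_1 - ell >= -m *)
Definition rank_ge_neg (m : nat) (l : seq nat) : bool :=
  size l <= m + head 0 l.

Definition Q (m n : nat) (l : seq nat) : bool :=
  partition_of n l && in_rankset m l.

Definition P (m n : nat) (l : seq nat) : bool :=
  partition_of n l && rank_ge_neg m l.

Definition conj_part (l : seq nat) : seq nat :=
  mkseq (fun i => count (fun x => i < x) l) (foldr maxn 0 l).

(* m-Durfee rectangle: largest j >= 0 with lambda_{m+j} >= j
   (j = 0 always qualifies; any qualifying j >= 1 satisfies j <= ell). *)
Definition durfee (m : nat) (l : seq nat) : nat :=
  \max_(j < (size l).+1 | (val j == 0) || (val j <= nth 0 l (m + j).-1)) val j.

Definition dalpha (m : nat) (l : seq nat) : seq nat :=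
  conj_part [seq x - durfee m l | x <- take (m + durfee m l) l].

Definition dbeta (m : nat) (l : seq nat) : seq nat :=
  drop (m + durfee m l) l.

Definition Q4 (m n : nat) (l : seq nat) : bool :=
  let j := durfee m l in
  let a := dalpha m l in
  let b := dbeta m l in
  [&& Q m n l, 1 <= j, size a < size b,
      nth 0 a 0 == m + j, nth 0 a 1 < m + j & smallest_ge2 b].

Definition P4 (m n : nat) (mu : seq nat) : bool :=
  let j := durfee m mu in
  let g := dalpha m mu in
  let d := dbeta m mu in
  [&& P m n mu, 1 <= j, size g == size d,
      nth 0 g 0 == (m + j).-1, nth 0 d 0 == j & 2 \in d].

From mathcomp Require Import all_boot zify.
Set Implicit Arguments. Unset Strict Implicit. Unset Printing Implicit Defensive.

(* Let lambda be in Q_4(m,n) with m-Durfee size j.  The conditions defining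
   Q_4 force lambda = (p + (j+1)) ++ (j+1, j) ++ b, where p has m+j-1 parts,
   all smaller than c = #b, and b has all its parts in [2, j].  From (p, b)
   we build
       phi = (j+c+1) :: (long + (j+1)) ++ (j, j) ++ (lifted columns of short),
   where s lists the columns 3..j of b and (long, short) is obtained by
   switching the tails of p and s at their largest admissible index.  Then
   phi has the same size, m-Durfee size j, and the P_4 shape.  Every step is
   invertible: the switch index is recovered from the switched pair, short
   from its first columns, and b from its length and its columns 3..j. *)

Lemma geq_trans : transitive geq.
Proof. by move=> a b c /= Hba Hcb; apply: leq_trans Hcb Hba. Qed.

Lemma sorted_geq_nth (s : seq nat) i k :
  sorted geq s -> i <= k -> nth 0 s k <= nth 0 s i.
Proof.
move=> Hs Hik; case: (ltnP k (size s)) => Hk; last by rewrite nth_default.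
by apply: (sorted_leq_nth geq_trans (fun x => leqnn x)) => //; rewrite inE; lia.
Qed.

Lemma sorted_geqP (s : seq nat) :
  (forall i, i.+1 < size s -> nth 0 s i.+1 <= nth 0 s i) -> sorted geq s.
Proof. by move=> H; apply/(sortedP 0) => i Hi; apply: H. Qed.

Lemma count_all (p : pred nat) (s : seq nat) : all p s -> count p s = size s.
Proof. by rewrite all_count => /eqP. Qed.

Lemma count_none (p : pred nat) (s : seq nat) : all (predC p) s -> count p s = 0.
Proof. by move=> H; apply/eqP; rewrite -leqn0 leqNgt -has_count -all_predC. Qed.

(* The column counts #{x in s | k < x} of a nonincreasing sequence, together
   with its length, determine it: they determine every multiplicity. *)
Lemma eq_sorted_count_gt (s1 s2 : seq nat) :
  sorted geq s1 -> sorted geq s2 -> size s1 = size s2 ->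
  (forall k, count (fun x => k < x) s1 = count (fun x => k < x) s2) -> s1 = s2.
Proof.
move=> H1 H2 Hsz Hc.
have count_gt_pred (s : seq nat) x : 0 < x ->
    count (fun y => x.-1 < y) s = count_mem x s + count (fun y => x < y) s.
  by move=> Hx; elim: s => //= a s ->; case: (ltngtP a x); lia.
have size_count0 (s : seq nat) : size s = count_mem 0 s + count (fun y => 0 < y) s.
  by elim: s => //= a s ->; case: a => [|a] /=; lia.
have Hmem x : count_mem x s1 = count_mem x s2.
  case: x => [|x].
  - by have := size_count0 s1; have := size_count0 s2; rewrite Hc Hsz; lia.
  - have := count_gt_pred s1 _ (ltn0Sn x); have := count_gt_pred s2 _ (ltn0Sn x).
    by rewrite /= Hc Hc; lia.
apply: (sorted_eq geq_trans) => //.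
- by move=> a b /andP [] /= ? ?; apply/eqP; rewrite eqn_leq; apply/andP.
- by apply/allP => x _ /=; rewrite Hmem.
Qed.

Lemma eq_sorted_count_window (a b : nat) (s1 s2 : seq nat) :
  sorted geq s1 -> sorted geq s2 -> size s1 = size s2 ->
  all (fun x => a <= x <= b) s1 -> all (fun x => a <= x <= b) s2 ->
  (forall k, a <= k < b -> count (fun x => k < x) s1 = count (fun x => k < x) s2) ->
  s1 = s2.
Proof.
move=> H1 H2 Hsz B1 B2 Hc; apply: eq_sorted_count_gt => // k.
case: (ltnP k a) => Hka; last case: (ltnP k b) => Hkb.
- by rewrite !count_all // ?Hsz; [apply: sub_all B2 | apply: sub_all B1] => x /=; lia.
- by apply: Hc; lia.
- by rewrite !count_none //; [apply: sub_all B2 | apply: sub_all B1] => x /=; lia.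
Qed.

Lemma sumn_mkseqD (f g : nat -> nat) N :
  sumn (mkseq (fun k => f k + g k) N) = sumn (mkseq f N) + sumn (mkseq g N).
Proof. by elim: N => // N IH; rewrite !mkseqS !sumn_rcons IH; lia. Qed.

Lemma sumn_count_gt (s : seq nat) N : all (fun x => x <= N) s ->
  sumn s = sumn (mkseq (fun k => count (fun x => k < x) s) N).
Proof.
have sumn_indicator x M : sumn (mkseq (fun k => ((k < x) : nat)) M) = minn x M.
  elim: M => [|M IH]; first by rewrite /=; lia.
  by rewrite mkseqS sumn_rcons IH; case: (ltnP M x) => /=; lia.
elim: s => [|a s IH] /=.
- by move=> _; elim: N => // N IH; rewrite mkseqS sumn_rcons -IH.
- by move=> /andP [Ha Hs]; rewrite sumn_mkseqD sumn_indicator -IH //; lia.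
Qed.

Lemma foldr_maxn_sorted (s : seq nat) : sorted geq s -> foldr maxn 0 s = head 0 s.
Proof.
elim: s => //= a s IH Hs.
rewrite IH; last exact: path_sorted Hs.
by case: s Hs {IH} => [|b s] /=; [lia | move=> /andP [Hb _]; lia].
Qed.

Lemma size_conj_part (s : seq nat) : size (conj_part s) = foldr maxn 0 s.
Proof. by rewrite size_mkseq. Qed.

Lemma nth_conj_part (s : seq nat) i :
  nth 0 (conj_part s) i = count (fun x => i < x) s.
Proof.
rewrite /conj_part; case: (ltnP i (foldr maxn 0 s)) => Hi; first by rewrite nth_mkseq.
rewrite nth_default ?size_mkseq // count_none //; apply/allP => x Hx /=.
suff : x <= foldr maxn 0 s by lia.
by elim: s Hx {Hi} => //= b s IH; rewrite inE => /orP [/eqP ->|/IH]; lia.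
Qed.

Definition switch_short (p s : seq nat) (y : nat) : seq nat := take y.+1 p ++ drop y s.
Definition switch_long (p s : seq nat) (y : nat) : seq nat := take y s ++ drop y.+1 p.

(* y is admissible when both switched sequences are again nonincreasing. *)
Definition admissible (p s : seq nat) (y : nat) : bool :=
  (nth 0 s y <= nth 0 p y) && ((y == 0) || (nth 0 p y.+1 <= nth 0 s y.-1)).

Definition switch_index (p s : seq nat) (r : nat) : nat :=
  \max_(y < r.+1 | admissible p s y) y.

Section Switch.
Variables (p s : seq nat) (r : nat).
Hypotheses (Hp : sorted geq p) (Hs : sorted geq s) (Hsz : size s = r) (Hpsz : r < size p).

(* Some y <= r is admissible: start from s_r = 0 <= p_r and descend while
   s_(y-1) <= p_(y-1); where this fails, s_(y-1) > p_(y-1) >= p_(y+1). *)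
Lemma admissible_exists : exists2 y, y <= r & admissible p s y.
Proof.
suff H y : y <= r -> nth 0 s y <= nth 0 p y -> exists2 y', y' <= y & admissible p s y'.
  have Hr : nth 0 s r <= nth 0 p r by rewrite nth_default ?Hsz.
  by have [y' Hy' Hadm] := H r (leqnn r) Hr; exists y'.
elim: y => [|y IH] Hy Hc; first by exists 0 => //; rewrite /admissible Hc.
case: (leqP (nth 0 s y) (nth 0 p y)) => H.
- by have [y' H1 H2] := IH (ltnW Hy) H; exists y' => //; lia.
- exists y.+1 => //; rewrite /admissible Hc /=.
  by have := @sorted_geq_nth p y y.+2 Hp (leqW (leqnSn y)); lia.
Qed.

Lemma switch_indexP : [/\ switch_index p s r <= r, admissible p s (switch_index p s r) &
  forall y, y <= r -> admissible p s y -> y <= switch_index p s r].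
Proof.
have [y0 Hy0 Hadm0] := admissible_exists.
have Hcard : 0 < #|[pred i : 'I_r.+1 | admissible p s i]|.
  by apply/card_gt0P; exists (Ordinal (leq_ltn_trans Hy0 (ltnSn r))); rewrite inE.
have [i0 Hi0 Heq] := eq_bigmax_cond (fun i : 'I_r.+1 => val i) Hcard.
have -> : switch_index p s r = val i0 by rewrite -Heq; apply: eq_bigl.
split; [by rewrite -ltnS ltn_ord | by move: Hi0; rewrite inE | move=> y Hy Hadm].
rewrite -Heq; apply: (@leq_bigmax_cond _ _ (fun i => val i) (Ordinal (leq_ltn_trans Hy (ltnSn r)))).
by rewrite inE.
Qed.

Section AtIndex.
Variable y : nat.
Hypothesis Hy : y <= r.

Lemma nth_switch_short i :
  nth 0 (switch_short p s y) i = if i <= y then nth 0 p i else nth 0 s i.-1.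
Proof.
rewrite /switch_short nth_cat size_takel; last lia.
rewrite ltnS; case: ifP => H; first by rewrite nth_take.
by rewrite nth_drop; congr nth; lia.
Qed.

Lemma nth_switch_long i :
  nth 0 (switch_long p s y) i = if i < y then nth 0 s i else nth 0 p i.+1.
Proof.
rewrite /switch_long nth_cat size_takel; last lia.
case: ifP => H; first by rewrite nth_take.
by rewrite nth_drop; congr nth; lia.
Qed.

Lemma size_switch_short : size (switch_short p s y) = r.+1.
Proof. by rewrite size_cat size_takel ?size_drop; lia. Qed.

Lemma size_switch_long : size (switch_long p s y) = (size p).-1.
Proof. by rewrite size_cat size_takel ?size_drop; lia. Qed.

Lemma sumn_switch :
  sumn (switch_long p s y) + sumn (switch_short p s y) = sumn p + sumn s.
Proof.
rewrite /switch_long /switch_short !sumn_cat.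
rewrite -[sumn p](congr1 sumn (cat_take_drop y.+1 p)) sumn_cat.
by rewrite -[sumn s](congr1 sumn (cat_take_drop y s)) sumn_cat; lia.
Qed.

Lemma switch_involutive :
  switch_short (switch_short p s y) (switch_long p s y) y = p /\
  switch_long (switch_short p s y) (switch_long p s y) y = s.
Proof.
rewrite /switch_short /switch_long.
have E1 : size (take y.+1 p) = y.+1 by rewrite size_takel; lia.
have E2 : size (take y s) = y by rewrite size_takel; lia.
by rewrite !take_size_cat // !drop_size_cat // !cat_take_drop.
Qed.

Lemma switch_long_bound c : all (fun x => x <= c) p -> all (fun x => x <= c) s ->
  all (fun x => x <= c) (switch_long p s y).
Proof.
move=> /(all_nthP 0) Hpc /(all_nthP 0) Hsc; apply/(all_nthP 0) => i.
rewrite size_switch_long nth_switch_long => Hi.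
by case: (ltnP i y) => Hiy; [apply: Hsc | apply: Hpc]; lia.
Qed.

Hypothesis Hadm : admissible p s y.

Lemma sorted_switch_short : sorted geq (switch_short p s y).
Proof.
case/andP: Hadm => Hsp _; apply: sorted_geqP => i; rewrite size_switch_short => Hi.
rewrite !nth_switch_short; case: (leqP i.+1 y) => H1.
- by rewrite (_ : i <= y) ?sorted_geq_nth //; lia.
- case: (leqP i y) => H2; first by rewrite (_ : i = y) //; lia.
  exact: (sorted_geq_nth Hs (leq_pred i)).
Qed.

Lemma sorted_switch_long : sorted geq (switch_long p s y).
Proof.
case/andP: Hadm => _ Hps; apply: sorted_geqP => i; rewrite size_switch_long => Hi.
rewrite !nth_switch_long; case: (ltnP i.+1 y) => H1.
- by rewrite (_ : i < y) ?sorted_geq_nth //; lia.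
- case: (ltnP i y) => H2; last exact: sorted_geq_nth.
  by move: Hps; rewrite (_ : y = i.+1) //; lia.
Qed.

Lemma switch_short_bound c : all (fun x => x <= c) p ->
  all (fun x => x <= c) (switch_short p s y).
Proof.
case/andP: Hadm => Hsp _ /(all_nthP 0) Hpc; apply/(all_nthP 0) => i.
rewrite size_switch_short nth_switch_short => Hi; case: (leqP i y) => Hiy; first by apply: Hpc; lia.
apply: leq_trans (sorted_geq_nth Hs (_ : y <= i.-1)) _; first lia.
by apply: leq_trans Hsp _; apply: Hpc; lia.
Qed.

Lemma admissible_switch y' : y' <= r ->
  admissible (switch_short p s y) (switch_long p s y) y' = admissible p s y'.
Proof.
move=> Hy'; rewrite /admissible !nth_switch_short !nth_switch_long.
case: (ltngtP y' y) => H.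
- have E1 : (y' <= y) = true by lia.
  have E2 : (y'.-1 < y) = true by lia.
  by rewrite ?E1 ?E2.
- have E0 : (y' < y) = false by lia.
  have E1 : (y' <= y) = false by lia.
  have E2 : (y'.-1 < y) = false by lia.
  rewrite ?E0 ?E1 ?E2.
  by case: y' H Hy' {E0 E1 E2} => [|y''] H Hy' /=; [lia | rewrite andbC].
- subst y'; rewrite ?ltnn ?leqnn.
  case/andP: Hadm => Hsp Hps; rewrite Hsp Hps (sorted_geq_nth Hp (leqnSn y)) /=.
  case: y Hy Hadm Hsp Hps => //= z _ _ _ _.
  by rewrite ltnSn (sorted_geq_nth Hs (leqnSn z)).
Qed.

End AtIndex.

Lemma switch_index_switch :
  switch_index (switch_short p s (switch_index p s r))
               (switch_long p s (switch_index p s r)) r = switch_index p s r.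
Proof.
have [Hy Hadm _] := switch_indexP; rewrite [RHS]/switch_index.
apply: eq_bigl => i /=; apply: admissible_switch => //.
by rewrite -ltnS ltn_ord.
Qed.

End Switch.

Lemma switch_inj p1 s1 p2 s2 r :
  sorted geq p1 -> sorted geq s1 -> size s1 = r -> r < size p1 ->
  sorted geq p2 -> sorted geq s2 -> size s2 = r -> r < size p2 ->
  switch_long p1 s1 (switch_index p1 s1 r) = switch_long p2 s2 (switch_index p2 s2 r) ->
  switch_short p1 s1 (switch_index p1 s1 r) = switch_short p2 s2 (switch_index p2 s2 r) ->
  p1 = p2 /\ s1 = s2.
Proof.
move=> Hp1 Hs1 Hsz1 Hpsz1 Hp2 Hs2 Hsz2 Hpsz2 EL ES.
have Ey : switch_index p1 s1 r = switch_index p2 s2 r.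
  by rewrite -(switch_index_switch Hp1 Hs1 Hsz1 Hpsz1) EL ES
             (switch_index_switch Hp2 Hs2 Hsz2 Hpsz2).
have [Hy1 _ _] := switch_indexP Hp1 Hs1 Hsz1 Hpsz1.
have [Hy2 _ _] := switch_indexP Hp2 Hs2 Hsz2 Hpsz2.
have [I1 I2] := switch_involutive Hp1 Hs1 Hsz1 Hpsz1 Hy1.
have [J1 J2] := switch_involutive Hp2 Hs2 Hsz2 Hpsz2 Hy2.
split; first by rewrite -[LHS]I1 -[RHS]J1 EL ES Ey.
by rewrite -[LHS]I2 -[RHS]J2 EL ES Ey.
Qed.

Lemma durfee_max m l j : j <= size l -> j <= nth 0 l (m + j).-1 -> j <= durfee m l.
Proof.
move=> Hj Hjl; rewrite /durfee.
apply: (@leq_bigmax_cond _ _ (fun i => val i) (Ordinal (leq_ltn_trans Hj (ltnSn _)))).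
by rewrite /= Hjl orbT.
Qed.

Lemma durfeeE m l j : sorted geq l -> j <= size l ->
  (0 < j -> j <= nth 0 l (m + j).-1) -> nth 0 l (m + j) <= j -> durfee m l = j.
Proof.
move=> Hl Hj Hin Hout; apply/eqP; rewrite eqn_leq; apply/andP; split.
- apply/bigmax_leqP => -[i /= _] /orP [/eqP -> //|Hi].
  case: (leqP i j) => // Hji.
  by have := sorted_geq_nth Hl (_ : m + j <= (m + i).-1); lia.
- by case: j Hj Hin Hout => // j Hj Hin _; apply: durfee_max => //; apply: Hin.
Qed.

Lemma nth_dalpha m l i :
  nth 0 (dalpha m l) i = count (fun x => i + durfee m l < x) (take (m + durfee m l) l).
Proof. by rewrite /dalpha nth_conj_part count_map; apply: eq_count => x /=; lia. Qed.

Lemma size_dalpha m l : sorted geq l -> 0 < m + durfee m l ->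
  size (dalpha m l) = head 0 l - durfee m l.
Proof.
move=> Hl Hmj; rewrite /dalpha size_conj_part foldr_maxn_sorted.
- by case: l {Hl Hmj} (m + durfee m l) Hmj => [|x l] [|k] //=; rewrite take0.
- by apply: homo_sorted (take_sorted _ Hl) => x y /=; lia.
Qed.

(* A partition of Q_4(m,n) has the form (p + (j+1)) ++ (j+1, j) ++ b. *)
Definition rebuild (j : nat) (p b : seq nat) : seq nat :=
  [seq x + j.+1 | x <- p] ++ j.+1 :: j :: b.

Definition q4_data (m j : nat) (p b : seq nat) : Prop :=
  [/\ 2 <= j, size p = (m + j).-1, sorted geq p, all (fun x => x < size b) p &
      sorted geq b /\ all (fun x => 2 <= x <= j) b].

(* Columns 3..j of the diagram of b. *)
Definition deep_columns (j : nat) (b : seq nat) : seq nat :=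
  mkseq (fun i => count (fun x => i.+2 < x) b) (j - 2).

Definition bump_head (d : seq nat) : seq nat := (head 0 d).+1 :: behead d.

Definition lifted_columns (c : nat) (d : seq nat) : seq nat :=
  mkseq (fun k => (count (fun x => k < x) (bump_head d)).+1) c.

Definition phi (j : nat) (p b : seq nat) : seq nat :=
  let s := deep_columns j b in
  let y := switch_index p s (j - 2) in
  (j + (size b).+1) :: [seq x + j.+1 | x <- switch_long p s y] ++
     j :: j :: lifted_columns (size b) (switch_short p s y).

Lemma sorted_deep_columns j b : sorted geq (deep_columns j b).
Proof.
apply: sorted_geqP => i; rewrite size_mkseq => Hi.
by rewrite !nth_mkseq; try lia; apply: sub_count => x /=; lia.
Qed.

Lemma size_deep_columns j b : size (deep_columns j b) = j - 2.
Proof. by rewrite size_mkseq. Qed.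

Lemma deep_columns_bound j b : all (fun x => x <= size b) (deep_columns j b).
Proof. by apply/allP => x /mapP [k _ ->]; apply: count_size. Qed.

(* Cells of b: two full columns plus the deep columns. *)
Lemma sumn_deep_columns j b : 2 <= j -> all (fun x => 2 <= x <= j) b ->
  sumn b = 2 * size b + sumn (deep_columns j b).
Proof.
move=> Hj Hb; rewrite (sumn_count_gt (N := j)); last by apply: sub_all Hb => x /andP [].
have -> : j = (j - 2).+2 by lia.
have iota2 k : iota 2 k = map (addn 2) (iota 0 k) by rewrite -iotaDl.
rewrite /mkseq /= iota2 -map_comp !count_all; try by apply: sub_all Hb => x /=; lia.
rewrite /deep_columns /mkseq (_ : (j - 2).+2 - 2 = j - 2); last lia.
by rewrite addnA addnn -mul2n.
Qed.

Section Construction.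
Variables (m j : nat) (p b : seq nat).
Hypothesis Hdata : q4_data m j p b.

Let c := size b.
Let s := deep_columns j b.
Let y := switch_index p s (j - 2).
Let long := switch_long p s y.
Let short := switch_short p s y.

Lemma data_index : j - 2 < size p.
Proof. by case: Hdata => *; lia. Qed.

Lemma data_tail_nonempty : 0 < c.
Proof.
case: Hdata => Hj Hpsz _ Hpc _; move: Hpc; rewrite /c.
by case: p Hpsz => [|x p'] /= Hpsz; [lia | case/andP => Hx _; lia].
Qed.

Lemma data_switch_index : y <= j - 2 /\ admissible p s y.
Proof.
case: Hdata => _ _ Hp _ _.
by case: (switch_indexP Hp (sorted_deep_columns j b) (size_deep_columns j b) data_index).
Qed.

Lemma long_spec : [/\ sorted geq long, size long = (m + j).-2 & all (fun x => x <= c) long].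
Proof.
have Hs := sorted_deep_columns j b; have Hssz := size_deep_columns j b.
have [Hy Hadm] := data_switch_index.
case: Hdata => _ Hpsz Hp Hpc _; split.
- exact: (sorted_switch_long Hp Hs Hssz data_index Hy Hadm).
- by rewrite (size_switch_long Hp Hs Hssz data_index Hy) Hpsz.
- have Hpc' : all (fun x => x <= c) p by apply: sub_all Hpc => x /=; lia.
  exact: (switch_long_bound Hp Hs Hssz data_index Hy Hpc' (deep_columns_bound j b)).
Qed.

Lemma short_spec : [/\ sorted geq short, size short = (j - 2).+1,
  all (fun x => x <= c.-1) short & sumn long + sumn short = sumn p + sumn s].
Proof.
have Hs := sorted_deep_columns j b; have Hssz := size_deep_columns j b.
have [Hy Hadm] := data_switch_index.
case: Hdata => _ Hpsz Hp Hpc _; split.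
- exact: (sorted_switch_short Hp Hs Hssz data_index Hy Hadm).
- exact: (size_switch_short Hp Hs Hssz data_index Hy).
- apply: (switch_short_bound Hp Hs Hssz data_index Hy Hadm).
  by apply: sub_all Hpc => x /=; lia.
- exact: (sumn_switch Hp Hs Hssz data_index Hy).
Qed.

Lemma bump_spec : [/\ sorted geq (bump_head short), size (bump_head short) = j.-1,
   all (fun x => x <= c) (bump_head short), sumn (bump_head short) = (sumn short).+1 &
   count (fun x => head 0 short < x) (bump_head short) = 1].
Proof.
have [Hsh Hshsz Hshc _] := short_spec.
have Hj : 2 <= j by case: Hdata.
have Hc := data_tail_nonempty.
rewrite /bump_head; case: short Hsh Hshsz Hshc => [|x d] //= Hsh Hshsz /andP [Hx Hd].
have Hdx : all (fun z => z <= x) d by apply: order_path_min geq_trans Hsh.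
split.
- by case: d Hsh {Hshsz Hd Hdx} => //= z d /andP [Hzx ->]; rewrite andbT; lia.
- lia.
- by rewrite (_ : x < c) //=; [apply: sub_all Hd => z /=; lia | lia].
- lia.
- by rewrite ltnSn count_none //; apply: sub_all Hdx => z /=; lia.
Qed.

Let lifted := lifted_columns c short.

Lemma lifted_spec : [/\ sorted geq lifted, size lifted = c,
   all (fun x => 1 <= x <= j) lifted, 2 \in lifted & sumn lifted = c + (sumn short).+1].
Proof.
have [Hd Hdsz Hdc Hdsum Hdcount] := bump_spec.
have [_ _ Hshc _] := short_spec.
have Hc := data_tail_nonempty.
have Hj : 2 <= j by case: Hdata.
split.
- apply: sorted_geqP => i; rewrite size_mkseq => Hi; rewrite !nth_mkseq; try lia.
  by rewrite ltnS; apply: sub_count => x /=; lia.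
- by rewrite size_mkseq.
- apply/allP => x /mapP [k _ ->].
  by have := count_size (fun x => k < x) (bump_head short); rewrite Hdsz; lia.
- apply/mapP; exists (head 0 short); last by rewrite Hdcount.
  rewrite mem_iota /=; suff : head 0 short <= c.-1 by lia.
  by case: (short) Hshc => //= x d /andP [].
- rewrite /lifted /lifted_columns.
  rewrite (eq_mkseq (g := fun k => 1 + count (fun x => k < x) (bump_head short))) //.
  rewrite sumn_mkseqD -(sumn_count_gt (N := c)) // Hdsum.
  by congr addn; elim: (c) => // k IH; rewrite mkseqS sumn_rcons IH; lia.
Qed.

Lemma phi_eq : phi j p b = (j + c.+1) :: [seq x + j.+1 | x <- long] ++ j :: j :: lifted.
Proof. by []. Qed.

Lemma phi_sorted : sorted geq (phi j p b).
Proof.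
have [Hl _ Hlc] := long_spec; have [Hlift _ Hliftj _ _] := lifted_spec.
rewrite phi_eq /= cat_path; apply/andP; split.
- rewrite (path_sortedE geq_trans); apply/andP; split.
  + by apply/allP => _ /mapP [x Hx ->]; move/allP: Hlc => /(_ x Hx) /=; lia.
  + by apply: homo_sorted Hl => x z /=; lia.
- have Hlast : j <= last (j + c.+1) [seq x + j.+1 | x <- long].
    by have := mem_last (j + c.+1) [seq x + j.+1 | x <- long];
       rewrite inE => /orP [/eqP ->|/mapP [x _ ->]]; lia.
  rewrite /= Hlast leqnn /= (path_sortedE geq_trans) Hlift andbT.
  by apply: sub_all Hliftj => x /andP [].
Qed.

Lemma phi_pos : all (fun x => 0 < x) (phi j p b).
Proof.
have [_ _ Hliftj _ _] := lifted_spec; have Hj : 2 <= j by case: Hdata.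
rewrite phi_eq /= all_cat /= (_ : 0 < j) ?addnS //=; last lia.
apply/andP; split; first by apply/allP => _ /mapP [x _ ->]; rewrite addnS.
by apply: sub_all Hliftj => x /andP [].
Qed.

Lemma sumn_phi : sumn (phi j p b) = sumn (rebuild j p b).
Proof.
have [_ Hlsz _] := long_spec; have [_ _ _ _ Hliftsum] := lifted_spec.
have [_ _ _ Hswitch] := short_spec.
have [Hj Hpsz _ _ [_ Hb]] := Hdata.
have Hbsum : sumn b = 2 * c + sumn s := sumn_deep_columns Hj Hb.
have sumn_lift (t : seq nat) : sumn [seq x + j.+1 | x <- t] = sumn t + size t * j.+1.
  by elim: t => //= x t ->; lia.
rewrite phi_eq /rebuild /= !sumn_cat /= Hliftsum Hbsum !sumn_lift Hlsz Hpsz.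
have -> : (m + j).-1 * j.+1 = (m + j).-2 * j.+1 + j.+1.
  by rewrite [RHS]addnC -mulSn; congr muln; lia.
lia.
Qed.

Lemma phi_split :
  take (m + j) (phi j p b) = (j + c.+1) :: [seq x + j.+1 | x <- long] ++ [:: j] /\
  drop (m + j) (phi j p b) = j :: lifted.
Proof.
have [_ Hlsz _] := long_spec; have Hj : 2 <= j by case: Hdata.
have Emj : m + j = (size [seq x + j.+1 | x <- long]).+2 by rewrite size_map Hlsz; lia.
by rewrite phi_eq Emj /= take_cat drop_cat ltnNge leqnSn /= subSnn.
Qed.

Lemma size_phi : size (phi j p b) = m + j + c.+1.
Proof.
have [_ Hlsz _] := long_spec; have [_ Hliftsz _ _ _] := lifted_spec.
have Hj : 2 <= j by case: Hdata.
by rewrite phi_eq /= size_cat size_map /= Hliftsz Hlsz; lia.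
Qed.

Lemma durfee_phi : durfee m (phi j p b) = j.
Proof.
have [_ Hlsz _] := long_spec; have Hj : 2 <= j by case: Hdata.
have Emj : m + j = (size [seq x + j.+1 | x <- long]).+2 by rewrite size_map Hlsz; lia.
apply: durfeeE; [exact: phi_sorted | rewrite size_phi; lia | move=> _ |].
- by rewrite phi_eq Emj /= nth_cat ltnn subnn.
- by rewrite phi_eq Emj /= nth_cat ltnNge leqnSn /= subSnn.
Qed.

Lemma phi_P4 : P4 m (sumn (rebuild j p b)) (phi j p b).
Proof.
have [_ Hlsz _] := long_spec; have [_ Hliftsz _ Hlift2 _] := lifted_spec.
have [Htake Hdrop] := phi_split; have Hj : 2 <= j by case: Hdata.
have Hhead : head 0 (phi j p b) = j + c.+1 by [].
have Hcount : count (fun x => 0 + j < x) (take (m + j) (phi j p b)) = (m + j).-1.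
  rewrite Htake /= count_cat count_all /=; first by rewrite size_map Hlsz; lia.
  by apply/allP => _ /mapP [x _ ->] /=; lia.
rewrite /P4 /P /partition_of /is_part /rank_ge_neg durfee_phi phi_sorted phi_pos sumn_phi.
rewrite size_dalpha ?phi_sorted ?durfee_phi //; last lia.
rewrite nth_dalpha durfee_phi Hcount Hhead.
rewrite /dbeta durfee_phi Hdrop size_phi /= Hliftsz inE Hlift2 orbT !eqxx.
by rewrite /= !andbT; apply/and3P; split; [lia | lia | apply/eqP; lia].
Qed.

End Construction.

Lemma lifted_columns_inj c (d1 d2 : seq nat) :
  sorted geq (bump_head d1) -> sorted geq (bump_head d2) ->
  size (bump_head d1) = size (bump_head d2) ->
  all (fun x => x <= c) (bump_head d1) -> all (fun x => x <= c) (bump_head d2) ->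
  lifted_columns c d1 = lifted_columns c d2 -> bump_head d1 = bump_head d2.
Proof.
move=> H1 H2 Hsz B1 B2 E; apply: (eq_sorted_count_window (a := 0) (b := c)) => //.
move=> k /andP [_ Hk].
by have := congr1 (nth 0 ^~ k) E; rewrite /lifted_columns !nth_mkseq // => -[].
Qed.

Lemma bump_head_inj (d1 d2 : seq nat) :
  bump_head d1 = bump_head d2 -> 0 < size d1 -> 0 < size d2 -> d1 = d2.
Proof. by case: d1 => // x1 d1; case: d2 => // x2 d2 [-> ->]. Qed.

Lemma deep_columns_inj j (b1 b2 : seq nat) : sorted geq b1 -> sorted geq b2 ->
  size b1 = size b2 -> all (fun x => 2 <= x <= j) b1 -> all (fun x => 2 <= x <= j) b2 ->
  deep_columns j b1 = deep_columns j b2 -> b1 = b2.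
Proof.
move=> H1 H2 Hsz B1 B2 E; apply: (eq_sorted_count_window (a := 2) (b := j)) => // k Hk.
have := congr1 (nth 0 ^~ (k - 2)) E; rewrite /deep_columns !nth_mkseq; try lia.
by rewrite (_ : (k - 2).+2 = k) //; lia.
Qed.

Lemma phi_inj m j1 p1 b1 j2 p2 b2 : q4_data m j1 p1 b1 -> q4_data m j2 p2 b2 ->
  phi j1 p1 b1 = phi j2 p2 b2 -> [/\ j1 = j2, p1 = p2 & b1 = b2].
Proof.
move=> V1 V2 E.
have Ej : j1 = j2 by rewrite -(durfee_phi V1) E (durfee_phi V2).
subst j2; set j := j1 in V1 V2 E *.
have [_ Hl1sz _] := long_spec V1; have [_ Hl2sz _] := long_spec V2.
have [Hd1 Hd1sz Hd1c _ _] := bump_spec V1; have [Hd2 Hd2sz Hd2c _ _] := bump_spec V2.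
have [_ Hs1sz _ _] := short_spec V1; have [_ Hs2sz _ _] := short_spec V2.
(* The first part gives #b; the long parts have equal lengths, so the
   remaining parts split alike. *)
move: E; rewrite !phi_eq => -[Ec].
have Hbsz : size b1 = size b2 by lia.
move/eqP; rewrite eqseq_cat ?size_map ?Hl1sz ?Hl2sz // => /andP [/eqP El /eqP [Elift]].
have Elong := inj_map (@addIn j.+1) El.
rewrite Hbsz in Elift Hd1c.
have Ebump := lifted_columns_inj Hd1 Hd2 (etrans Hd1sz (esym Hd2sz)) Hd1c Hd2c Elift.
move/bump_head_inj: Ebump; rewrite Hs1sz Hs2sz => /(_ isT isT) Eshort.
(* Undo the switch, then recover b from its deep columns. *)
have [_ _ Hp1 _ [Hb1 Hb1j]] := V1; have [_ _ Hp2 _ [Hb2 Hb2j]] := V2.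
have [Ep Es] := switch_inj Hp1 (sorted_deep_columns j b1) (size_deep_columns j b1) (data_index V1)
                           Hp2 (sorted_deep_columns j b2) (size_deep_columns j b2) (data_index V2)
                           Elong Eshort.
by split => //; apply: deep_columns_inj Es.
Qed.

Definition core (m : nat) (l : seq nat) : seq nat :=
  [seq x - (durfee m l).+1 | x <- take (m + durfee m l).-1 l].

Definition foot (m : nat) (l : seq nat) : seq nat := drop (m + durfee m l).+1 l.

Section Q4Shape.
Variables (m n : nat) (l : seq nat).
Hypothesis HQ : Q4 m n l.

Let j := durfee m l.

Lemma Q4_partition : [/\ sorted geq l, sumn l = n & in_rankset m l].
Proof.
case/and5P: HQ; rewrite /Q /partition_of /is_part.
by move=> /andP [/andP [/andP [-> _] /eqP ->] ->].
Qed.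

Lemma Q4_sorted : sorted geq l.
Proof. by case: Q4_partition. Qed.

(* alpha_1 = m + j: the first m+j rows exist and are longer than j. *)
Lemma Q4_rows : m + j <= size l /\ forall i, i < m + j -> j < nth 0 l i.
Proof.
case/and5P: HQ => _ _ _ /eqP Ha0 _; move: Ha0; rewrite nth_dalpha -/j add0n => Hcount.
have Hsz : size (take (m + j) l) = m + j.
  by have := count_size (fun x => j < x) (take (m + j) l); rewrite size_take_min; lia.
have Hall : all (fun x => j < x) (take (m + j) l) by rewrite all_count Hcount Hsz.
split; first by move: Hsz; rewrite size_take_min; lia.
move=> i Hi; move/(all_nthP 0): Hall => /(_ i); rewrite Hsz nth_take //; exact.
Qed.

(* alpha_2 < m + j: row m+j has exactly j+1 cells. *)
Lemma Q4_corner : nth 0 l (m + j).-1 = j.+1.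
Proof.
have [Hsz Hrows] := Q4_rows; have Hl := Q4_sorted.
case/and5P: HQ => _ Hj _ _ /andP [Ha1 _]; move: Ha1; rewrite nth_dalpha -/j.
have Htake : size (take (m + j) l) = m + j by rewrite size_takel.
move=> Ha1; have : ~~ all (fun x => 1 + j < x) (take (m + j) l).
  by rewrite all_count Htake; apply/eqP; lia.
rewrite -has_predC => /hasP [x /(nthP 0) [i Hi <-]] /=.
rewrite Htake in Hi; rewrite nth_take // -leqNgt => Hx.
have := sorted_geq_nth Hl (_ : i <= (m + j).-1); have := Hrows (m + j).-1; lia.
Qed.

(* Maximality of j and m being in the rank set: row m+j+1 has exactly j cells. *)
Lemma Q4_foot : nth 0 l (m + j) = j.
Proof.
have [Hsz Hrows] := Q4_rows; have Hl := Q4_sorted.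
have [_ _ Hrank] := Q4_partition; case/and5P: HQ => _ Hj _ _ _.
have Hle : nth 0 l (m + j) <= j.
  rewrite leqNgt; apply/negP => Hgt.
  have Hszl : j.+1 <= size l.
    by case: (ltnP (m + j) (size l)) => H; [lia | move: Hgt; rewrite nth_default].
  by have := @durfee_max m l j.+1 Hszl; rewrite -/j addnS /=; lia.
move: Hrank => /orP [|/existsP [[i Hil] /= /eqP Hi]]; first lia.
case: (ltnP i (m + j)) => Him; first by have := Hrows i Him; lia.
by have := sorted_geq_nth Hl Him; lia.
Qed.

Lemma Q4_long : m + j < size l.
Proof.
have Hfoot := Q4_foot; case/and5P: HQ => _ Hj _ _ _.
by case: (ltnP (m + j) (size l)) => H //; move: Hfoot; rewrite nth_default; lia.
Qed.

(* beta = (j, foot) has smallest part >= 2: hence j >= 2, and the parts of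
   the foot lie in [2, j]. *)
Lemma Q4_tail : 2 <= j /\ all (fun x => 2 <= x <= j) (foot m l).
Proof.
have Hfoot := Q4_foot; have Hl := Q4_sorted.
case/and5P: HQ => _ _ _ _ /andP [_ Hb2].
have Hszl := Q4_long.
move/(all_nthP 0): Hb2; rewrite /dbeta -/j size_drop => Hb2.
split; first by have := Hb2 0; rewrite nth_drop addn0 Hfoot; apply; lia.
apply/(all_nthP 0) => i; rewrite /foot -/j size_drop => Hi; rewrite nth_drop.
have := Hb2 i.+1; rewrite nth_drop addnS -addSn => /(_ ltac:(lia)) ->.
by rewrite -Hfoot sorted_geq_nth //; lia.
Qed.

(* size alpha < size beta: every part of the core is smaller than the foot's length. *)
Lemma Q4_head : nth 0 l 0 - j.+1 < size (foot m l).
Proof.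
have [Hsz Hrows] := Q4_rows; have Hl := Q4_sorted.
case/and5P: HQ => _ Hj Hsize _ _; move: Hsize.
rewrite size_dalpha //; last lia.
rewrite /dbeta /foot -/j !size_drop.
rewrite (_ : head 0 l = nth 0 l 0); last by case: (l).
by have := Hrows 0; lia.
Qed.

Lemma Q4_data : q4_data m j (core m l) (foot m l).
Proof.
have [Hsz _] := Q4_rows; have [Hj Hb] := Q4_tail; have Hl := Q4_sorted.
have Hhead := Q4_head.
rewrite /core -/j; split => //.
- by rewrite size_map size_takel; lia.
- by apply: homo_sorted (take_sorted _ Hl) => x y /=; lia.
- apply/(all_nthP 0) => i; rewrite size_map size_takel => [Hi|]; last lia.
  rewrite (nth_map 0) ?size_takel ?nth_take //; try lia.
  by have := sorted_geq_nth Hl (leq0n i); lia.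
- by split; [apply: drop_sorted | ].
Qed.

Lemma Q4_rebuild : l = rebuild j (core m l) (foot m l).
Proof.
have [Hsz Hrows] := Q4_rows; have Hcorner := Q4_corner; have Hfoot := Q4_foot.
have [Hj _] := Q4_tail.
have Hszl := Q4_long.
rewrite /rebuild /core /foot -/j -map_comp map_id_in; last first.
  have Hbig : all (fun x => j < x) (take (m + j).-1 l).
    apply/(all_nthP 0) => i; rewrite size_takel => [Hi|]; last lia.
    by rewrite nth_take //; apply: Hrows; lia.
  by move=> x /(allP Hbig) /=; lia.
rewrite -{1}(cat_take_drop (m + j).-1 l) (drop_nth 0); last lia.
rewrite (_ : (m + j).-1.+1 = m + j); last lia.
by rewrite (drop_nth 0) // Hcorner Hfoot.
Qed.

End Q4Shape.

Definition phi_of (m : nat) (l : seq nat) : seq nat :=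
  phi (durfee m l) (core m l) (foot m l).

Theorem lemma4p5 (m n : nat) : 1 <= n ->
  exists f : seq nat -> seq nat,
    (forall l, Q4 m n l -> P4 m n (f l)) /\
    (forall l1 l2, Q4 m n l1 -> Q4 m n l2 -> f l1 = f l2 -> l1 = l2).
Proof.
move=> _; exists (phi_of m); split.
- move=> l HQ; have [_ Hsum _] := Q4_partition HQ.
  by have := phi_P4 (Q4_data HQ); rewrite -(Q4_rebuild HQ) Hsum.
- move=> l1 l2 H1 H2 E.
  have [Ej Ecore Efoot] := phi_inj (Q4_data H1) (Q4_data H2) E.
  by rewrite (Q4_rebuild H1) (Q4_rebuild H2) Ej Ecore Efoot.
Qed.
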